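(* Let $R$ be an integral domain, $M$ a maximal ideal of $R[X]$, and $P = M\cap R$. Then $M$ is power stable if and only if $P^{(t)} = P^t$ for all $t\geq 1$, i.e. if and only if $P^t$ is $P$-primary for every $t\geq 1$.
   Context: An ideal $I$ of the polynomial ring $R[X]$ over an integral domain $R$ is called power stable if $I^t\cap R = (I\cap R)^t$ for all integers $t\geq 1$. For a prime ideal $P$ of $R$, $P^{(t)} = P^tR_P\cap R$ is the $t$-th symbolic power. *)

From HB Require Import structures.
From mathcomp Require Import all_boot all_order all_algebra.
Set Implicit Arguments. Unset Strict Implicit. Unset Printing Implicit Defensive.
Import GRing.Theory.
Local Open Scope ring_scope.

Definition is_ideal (A : comNzRingType) (I : A -> Prop) : Prop :=
  [/\ I 0, (forall x y, I x -> I y -> I (x + y)) & (forall r x, I x -> I (r * x))].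

Definition is_maximal_ideal (A : comNzRingType) (I : A -> Prop) : Prop :=
  [/\ is_ideal I, ~ I 1 &
      forall J : A -> Prop, is_ideal J -> (forall x, I x -> J x) ->
        (forall x, J x <-> I x) \/ J 1].

Definition ideal_mul (A : comNzRingType) (I J : A -> Prop) : A -> Prop :=
  fun x => exists s : seq (A * A),
    (forall p, p \in s -> I p.1 /\ J p.2) /\ x = \sum_(p <- s) p.1 * p.2.

Fixpoint ideal_pow (A : comNzRingType) (I : A -> Prop) (t : nat) : A -> Prop :=
  match t with
  | 0%N => fun _ => True
  | t'.+1 => ideal_mul (ideal_pow I t') I
  end.

(* I ∩ R for an ideal I of R[X] (R embedded via constants). *)
Definition contraction (R : idomainType) (I : {poly R} -> Prop) : R -> Prop :=
  fun r => I r%:P.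

(* Symbolic power P^(t) = P^t R_P ∩ R; over a domain, x/1 ∈ P^t R_P
   iff s * x ∈ P^t for some s ∉ P. *)
Definition symbolic_pow (R : idomainType) (P : R -> Prop) (t : nat) : R -> Prop :=
  fun x => exists s, ~ P s /\ ideal_pow P t (s * x).

Definition power_stable (R : idomainType) (I : {poly R} -> Prop) : Prop :=
  forall t : nat, (1 <= t)%N ->
    forall r : R, contraction (ideal_pow I t) r <-> ideal_pow (contraction I) t r.

From HB Require Import structures.
From mathcomp Require Import all_boot all_order all_algebra.
From mathcomp Require Import ring zify.
From Stdlib Require Import Classical.
Set Implicit Arguments. Unset Strict Implicit. Unset Printing Implicit Defensive.
Import GRing.Theory.
Local Open Scope ring_scope.

(* Let P = M ∩ R.  Modulo the maximal ideal M every s ∉ M is a unit, so M^t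
   is M-primary and P^(t) ⊆ M^t ∩ R; power stability then gives P^(t) = P^t.
   Conversely take g ∈ M of least degree whose leading coefficient c is not
   in P.  Pseudo-division by g shows that every h ∈ M satisfies
   c^k h ∈ g R[X] + P[X], and multiplying out, every h ∈ M^t satisfies
   s h ∈ g R[X] + P^(t)[X] for some s ∉ P.  For a constant x, comparing
   coefficients from the top forces the cofactor into P^(t)[X], hence
   x ∈ P^(t) = P^t. *)

Lemma ex_minn_classic (Q : nat -> Prop) :
  (exists n, Q n) -> exists n, Q n /\ forall m, (m < n)%N -> ~ Q m.
Proof.
move=> [n Qn]; elim/ltn_ind: n Qn => n IHn Qn.
have [[m [lt_mn Qm]] | no_smaller] := classic (exists m, (m < n)%N /\ Q m).
  exact: IHn Qm.
by exists n; split=> // m lt_mn Qm; apply: no_smaller; exists m.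
Qed.

Section Ideals.
Variables (A : comNzRingType) (I : A -> Prop).
Hypothesis idI : is_ideal I.

Lemma ideal0 : I 0. Proof. by case: idI. Qed.

Lemma idealD x y : I x -> I y -> I (x + y). Proof. by case: idI => _ ID _; apply: ID. Qed.

Lemma idealMl r x : I x -> I (r * x). Proof. by case: idI => _ _ IM; apply: IM. Qed.

Lemma idealMr x r : I x -> I (x * r). Proof. by rewrite mulrC; apply: idealMl. Qed.

Lemma idealN x : I x -> I (- x). Proof. by move/(idealMl (-1)); rewrite mulN1r. Qed.

Lemma idealB x y : I x -> I y -> I (x - y).
Proof. by move=> Ix Iy; apply: idealD Ix (idealN Iy). Qed.

Lemma ideal_sum (T : eqType) (s : seq T) (F : T -> A) :
  (forall x, x \in s -> I (F x)) -> I (\sum_(x <- s) F x).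
Proof.
by move=> IF; rewrite big_seq; apply: (big_ind I ideal0 idealD) => x /IF.
Qed.

End Ideals.

Section IdealPowers.
Variable A : comNzRingType.
Implicit Types I J : A -> Prop.

Lemma is_ideal_mul I J : is_ideal I -> is_ideal (ideal_mul I J).
Proof.
move=> idI; split.
- by exists [::]; rewrite big_nil.
- move=> _ _ [s [sIJ ->]] [s' [s'IJ ->]]; exists (s ++ s').
  by split=> [p|]; rewrite ?mem_cat ?big_cat // => /orP[/sIJ | /s'IJ].
- move=> r _ [s [sIJ ->]]; exists [seq (r * p.1, p.2) | p <- s]; split.
  + by move=> _ /mapP[p /sIJ[Ip Jp] ->]; split=> //; apply: idealMl.
  + by rewrite big_map big_distrr; apply: eq_bigr => p _; rewrite /= mulrA.
Qed.

Lemma is_ideal_pow I t : is_ideal (ideal_pow I t).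
Proof. by elim: t => [|t IHt]; [split | apply: is_ideal_mul]. Qed.

Lemma ideal_powSM I t a b : ideal_pow I t a -> I b -> ideal_pow I t.+1 (a * b).
Proof.
move=> Ia Ib; exists [:: (a, b)]; rewrite big_seq1.
by split=> // p; rewrite inE => /eqP ->.
Qed.

Lemma ideal_pow1 I x : is_ideal I -> ideal_pow I 1 x <-> I x.
Proof.
move=> idI; split=> [[s [sI ->]] | Ix]; last by rewrite -[x]mul1r; apply: ideal_powSM.
by apply: (ideal_sum idI) => p /sI[_ Ip]; apply: idealMl.
Qed.

Lemma ideal_pow_exp I t m : I m -> ideal_pow I t (m ^+ t).
Proof. by move=> Im; elim: t => [|t IHt] //; rewrite exprSr; apply: ideal_powSM. Qed.

End IdealPowers.

Section MaximalIdeal.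
Variables (A : comNzRingType) (M : A -> Prop).
Hypothesis maxM : is_maximal_ideal M.

Lemma maximal_is_ideal : is_ideal M. Proof. by case: maxM. Qed.
Let idM := maximal_is_ideal.

Lemma maximal_proper : ~ M 1. Proof. by case: maxM. Qed.

Lemma maximal_unit_mod s : ~ M s -> exists m u, M m /\ 1 = m + s * u.
Proof.
have [_ _ maxJ] := maxM; move=> Ms.
pose J x := exists m u, M m /\ x = m + s * u.
have idJ : is_ideal J.
  split.
  - by exists 0, 0; rewrite mulr0 addr0; split=> //; apply: ideal0 idM.
  - move=> _ _ [m [u [Mm ->]]] [m' [u' [Mm' ->]]]; exists (m + m'), (u + u').
    by split; [apply: idealD | rewrite mulrDr addrACA].
  - move=> r _ [m [u [Mm ->]]]; exists (r * m), (r * u).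
    by split; [apply: idealMl | rewrite mulrDr mulrCA].
have MJ x : M x -> J x by exists x, 0; rewrite mulr0 addr0.
case: (maxJ J idJ MJ) => [JM | //]; case: Ms; apply/JM.
by exists 0, 1; rewrite mulr1 add0r; split=> //; apply: ideal0.
Qed.

Lemma maximal_prime a b : M (a * b) -> ~ M a -> M b.
Proof.
move=> Mab /maximal_unit_mod[m [u [Mm E]]].
have -> : b = b * m + a * b * u by rewrite -[b in LHS]mulr1 E; ring.
by apply: (idealD idM); [apply: idealMl | apply: idealMr].
Qed.

Lemma maximal_pow_primary s y t :
  ~ M s -> ideal_pow M t (s * y) -> ideal_pow M t y.
Proof.
move=> /maximal_unit_mod[m [u [Mm E]]] Msy.
have su : s * u = 1 - m by rewrite E addrAC subrr add0r.
(* [1 - m ^+ t] is a multiple of [1 - m], hence of [s]. *)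
have Ew : 1 - m ^+ t = s * (u * \sum_(i < t) m ^+ i).
  by rewrite mulrA su -opprB subrX1 -mulNr opprB.
have -> : y = y * m ^+ t + s * y * (u * \sum_(i < t) m ^+ i).
  by rewrite mulrAC -Ew; ring.
have idMt := is_ideal_pow M t.
apply: (idealD idMt); last exact: idealMr.
by apply: (idealMl idMt); apply: ideal_pow_exp.
Qed.

End MaximalIdeal.

Section SymbolicPowers.
Variables (R : idomainType) (P : R -> Prop).
Hypotheses (idP : is_ideal P) (P1 : ~ P 1)
  (primeP : forall a b, ~ P a -> ~ P b -> ~ P (a * b)).

Lemma is_ideal_symbolic_pow k : is_ideal (symbolic_pow P k).
Proof.
have [I0 ID IM] := is_ideal_pow P k; split.
- by exists 1; rewrite mulr0.
- move=> x y [s [Ps Psx]] [s' [Ps' Psy]]; exists (s * s'); split; first exact: primeP.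
  have -> : s * s' * (x + y) = s' * (s * x) + s * (s' * y) by ring.
  by apply: ID; apply: IM.
- by move=> r x [s [Ps Psx]]; exists s; rewrite mulrCA; split=> //; apply: IM.
Qed.

Lemma symbolic_pow0 x : symbolic_pow P 0 x.
Proof. by exists 1. Qed.

Lemma ideal_pow_symbolic k x : ideal_pow P k x -> symbolic_pow P k x.
Proof. by exists 1; rewrite mul1r. Qed.

Lemma symbolic_powK k a y : ~ P a -> symbolic_pow P k (a * y) -> symbolic_pow P k y.
Proof.
by move=> Pa [s [Ps Psay]]; exists (s * a); rewrite -mulrA; split=> //; apply: primeP.
Qed.

Lemma symbolic_pow1 x : symbolic_pow P 1 x <-> P x.
Proof.
split=> [[s [Ps /(ideal_pow1 _ idP) Psx]] | Px].
  by apply: NNPP => Px; apply: (primeP Ps Px).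
by exists 1; rewrite mul1r; split=> //; apply/ideal_pow1.
Qed.

Lemma symbolic_powSM k a b :
  symbolic_pow P k a -> P b -> symbolic_pow P k.+1 (a * b).
Proof.
move=> [s [Ps Psa]] Pb; exists s; split=> //.
by rewrite mulrA; apply: ideal_powSM.
Qed.

End SymbolicPowers.

Definition coefs_in (R : comNzRingType) (Q : R -> Prop) (p : {poly R}) : Prop :=
  forall i, Q p`_i.

Lemma size_drop_lead (R : nzRingType) (p : {poly R}) : p != 0 ->
  (size (p - (lead_coef p)%:P * 'X^((size p).-1))%R < size p)%N.
Proof.
move=> nz_p; have sz_p : (0 < size p)%N by rewrite size_poly_gt0.
rewrite -[X in (_ < X)%N](prednK sz_p) ltnS; apply/leq_sizeP => j le_j.
rewrite coefB coefCM coefXn.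
have [->|ne_j] := eqVneq j (size p).-1; first by rewrite mulr1 subrr.
by rewrite mulr0 subr0 nth_default // -(prednK sz_p) ltn_neqAle eq_sym ne_j.
Qed.

Section CoefficientIdeal.
Variables (R : comNzRingType) (Q : R -> Prop).
Hypothesis idQ : is_ideal Q.

Lemma is_ideal_coefs_in : is_ideal (coefs_in Q).
Proof.
split=> [i | p q Qp Qq i | r p Qp i]; rewrite ?coef0 ?coefD ?coefM.
- exact: ideal0.
- exact: idealD.
- by apply: (ideal_sum idQ) => j _; apply: idealMl.
Qed.

Lemma coefs_inCM c p : Q c -> coefs_in Q (c%:P * p).
Proof. by move=> Qc i; rewrite coefCM; apply: idealMr. Qed.

(* Comparing coefficients from the top down: the leading coefficient of [H]
   times [lead_coef g] is a top coefficient of [g * H + e], so it is minus a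
   coefficient of [e]. *)
Lemma coefs_in_cofactor (g H e : {poly R}) :
  (forall y, Q (lead_coef g * y) -> Q y) -> coefs_in Q e ->
  (forall i, ((size g).-1 <= i)%N -> (g * H + e)`_i = 0) -> coefs_in Q H.
Proof.
move=> satQ; have [n] := ubnP (size H); elim: n H e => // n IHn H e.
rewrite ltnS => sz_H Qe top0.
have [-> | nz_H] := eqVneq H 0; first by move=> i; rewrite coef0; apply: ideal0.
set c := lead_coef H; pose H' := H - c%:P * 'X^((size H).-1).
have Qc : Q c.
  apply: satQ; have sz_H0 : (0 < size H)%N by rewrite size_poly_gt0.
  have /eqP := top0 (size g + size H).-2 ltac:(lia).
  by rewrite coefD -mul_lead_coef addr_eq0 => /eqP ->; apply: idealN.
have QH' : coefs_in Q H'.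
  apply: (IHn H' (e + c%:P * (g * 'X^((size H).-1)))).
  - exact: leq_trans (size_drop_lead nz_H) sz_H.
  - by apply: (idealD is_ideal_coefs_in) => //; apply: coefs_inCM.
  - have -> : g * H' + (e + c%:P * (g * 'X^((size H).-1))) = g * H + e.
      by rewrite /H'; ring.
    exact: top0.
rewrite -[H](subrK (c%:P * 'X^((size H).-1))).
by apply: (idealD is_ideal_coefs_in) => //; apply: coefs_inCM.
Qed.

End CoefficientIdeal.

Section Contraction.
Variables (R : idomainType) (I : {poly R} -> Prop).
Hypothesis idI : is_ideal I.
Local Notation P := (contraction I).

Lemma is_ideal_contraction : is_ideal P.
Proof.
split; rewrite /contraction ?polyC0.
- exact: ideal0.
- by move=> x y Ix Iy; rewrite polyCD; apply: idealD.
- by move=> r x Ix; rewrite polyCM; apply: idealMl.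
Qed.

Lemma ideal_pow_contraction t r :
  ideal_pow P t r -> contraction (ideal_pow I t) r.
Proof.
elim: t r => [//|t IHt] _ [s [sP ->]].
exists [seq (p.1%:P, p.2%:P) | p <- s]; split.
- by move=> _ /mapP[p /sP[Pp1 Pp2] ->]; split=> //; apply: IHt.
- by rewrite big_map raddf_sum; apply: eq_bigr => p _; rewrite /= polyCM.
Qed.

Lemma coefs_in_contraction_low n :
  (forall h, I h -> (size h < n)%N -> P (lead_coef h)) ->
  forall h, I h -> (size h < n)%N -> coefs_in P h.
Proof.
have idP := is_ideal_contraction.
move=> leadP h; have [m] := ubnP (size h); elim: m h => // m IHm h.
rewrite ltnS => sz_h Ih lt_hn.
have [-> | nz_h] := eqVneq h 0; first by move=> i; rewrite coef0; apply: ideal0.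
have Pc := leadP h Ih lt_hn; have lt_drop := size_drop_lead nz_h.
rewrite -[h](subrK ((lead_coef h)%:P * 'X^((size h).-1))).
apply: (idealD (is_ideal_coefs_in idP)); last exact: coefs_inCM.
apply: IHm; [exact: leq_trans lt_drop sz_h | | exact: ltn_trans lt_drop lt_hn].
by apply: (idealB idI Ih); apply: idealMr.
Qed.

End Contraction.

Section MaximalPolynomialIdeal.
Variables (R : idomainType) (M : {poly R} -> Prop).
Hypothesis maxM : is_maximal_ideal M.
Local Notation P := (contraction M).

Let idM := maximal_is_ideal maxM.
Let idP := is_ideal_contraction idM.

Lemma contraction_proper : ~ P 1.
Proof. exact: maximal_proper maxM. Qed.

Lemma contraction_prime a b : ~ P a -> ~ P b -> ~ P (a * b).
Proof. by rewrite /contraction polyCM => Pa Pb /(maximal_prime maxM)/(_ Pa). Qed.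

Let idQ k : is_ideal (symbolic_pow P k) :=
  is_ideal_symbolic_pow contraction_proper contraction_prime k.
Let symbolic_pow1P x : symbolic_pow P 1 x <-> P x :=
  symbolic_pow1 idP contraction_proper contraction_prime x.

(* If [M] lay in [P[X]], it would be the maximal ideal [P + X R[X]],
   which contains [X]. *)
Lemma maximal_not_coefs_in : ~ (forall h, M h -> coefs_in P h).
Proof.
have [_ _ maxJ] := maxM; move=> MP.
pose J (h : {poly R}) := P h`_0.
have idJ : is_ideal J.
  split=> [| p q | r p]; rewrite /J ?coef0 ?coefD ?coef0M.
  - exact: ideal0.
  - exact: idealD.
  - exact: idealMl.
case: (maxJ J idJ (fun h Mh => MP h Mh 0%N)) => [JM | ]; last first.
  by rewrite /J coef1; apply: contraction_proper.
have MX : M 'X by apply/JM; rewrite /J coefX; apply: ideal0.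
by apply: contraction_proper; have := MP _ MX 1%N; rewrite coefX.
Qed.

Lemma exists_minimal_generator : exists g, [/\ M g, ~ P (lead_coef g),
  (1 < size g)%N & forall h, M h -> (size h < size g)%N -> coefs_in P h].
Proof.
have /ex_minn_classic[_ [[g [Mg Pg <-]] minimal]] :
    exists n g, [/\ M g, ~ P (lead_coef g) & size g = n].
  apply: NNPP => none; apply: maximal_not_coefs_in => h Mh.
  apply: (coefs_in_contraction_low idM (n := (size h).+1)) => // q Mq _.
  by apply: NNPP => Pq; apply: none; exists (size q), q.
have low : forall h, M h -> (size h < size g)%N -> coefs_in P h.
  apply: coefs_in_contraction_low => // h Mh lt_hg.
  by apply: NNPP => Ph; apply: (minimal _ lt_hg); exists h.
exists g; split=> //; rewrite ltnNge; apply/negP => sz_g; apply: Pg.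
have -> : lead_coef g = g`_0 by rewrite lead_coefE; case: (size g) sz_g => [|[|]].
by rewrite /contraction -size1_polyC.
Qed.

Section Reduction.
Variable g : {poly R}.
Hypotheses (Mg : M g) (Pg : ~ P (lead_coef g)) (size_g : (1 < size g)%N)
  (low_g : forall h, M h -> (size h < size g)%N -> coefs_in P h).

Definition in_sat_span k (h : {poly R}) : Prop :=
  exists2 s, ~ P s & exists H e, s%:P * h = g * H + e /\ coefs_in (symbolic_pow P k) e.

Lemma is_ideal_in_sat_span k : is_ideal (in_sat_span k).
Proof.
have idQk := is_ideal_coefs_in (idQ k); split.
- exists 1; first exact: contraction_proper.
  by exists 0, 0; rewrite !mulr0 addr0; split=> //; apply: ideal0.
- move=> x y [s Ps [H [e [E Qe]]]] [s' Ps' [H' [e' [E' Qe']]]].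
  exists (s * s'); first exact: contraction_prime.
  exists (s'%:P * H + s%:P * H'), (s'%:P * e + s%:P * e'); split.
  + have -> : (s * s')%:P * (x + y) = s'%:P * (s%:P * x) + s%:P * (s'%:P * y).
      by rewrite polyCM; ring.
    by rewrite E E'; ring.
  + by apply: (idealD idQk); apply: (idealMl idQk).
- move=> r x [s Ps [H [e [E Qe]]]]; exists s => //; exists (r * H), (r * e).
  by split; [rewrite mulrCA E; ring | apply: (idealMl idQk)].
Qed.

Lemma in_sat_spanSM k h1 h2 :
  in_sat_span k h1 -> in_sat_span 1 h2 -> in_sat_span k.+1 (h1 * h2).
Proof.
move=> [s Ps [H [e [E Qe]]]] [s' Ps' [H' [e' [E' Qe']]]].
exists (s * s'); first exact: contraction_prime.
exists (H * g * H' + H * e' + e * H'), (e * e'); split.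
- have -> : (s * s')%:P * (h1 * h2) = (s%:P * h1) * (s'%:P * h2) by rewrite polyCM; ring.
  by rewrite E E'; ring.
- move=> i; rewrite coefM; apply: (ideal_sum (idQ _)) => j _.
  by apply: symbolic_powSM (Qe _) _; apply/symbolic_pow1P.
Qed.

Lemma in_sat_span_maximal h : M h -> in_sat_span 1 h.
Proof.
move=> Mh; set c := lead_coef g.
have Pc k : ~ P (c ^+ k).
  elim: k => [|k IHk]; first exact: contraction_proper.
  by rewrite exprS; apply: contraction_prime.
exists (c ^+ scalp h g) => //; exists (h %/ g), (h %% g).
split; first by rewrite mul_polyC Pdiv.Idomain.divp_eq mulrC.
suff Pr : coefs_in P (h %% g) by move=> i; apply/symbolic_pow1P.
apply: low_g; last by rewrite Pdiv.Idomain.ltn_modp -size_poly_gt0 ltnW.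
have -> : h %% g = (c ^+ scalp h g)%:P * h - h %/ g * g.
  by rewrite mul_polyC Pdiv.Idomain.divp_eq addrC addKr.
by apply: (idealB idM); apply: (idealMl idM).
Qed.

Lemma in_sat_span_pow k h : ideal_pow M k h -> in_sat_span k h.
Proof.
elim: k h => [|k IHk] h.
  move=> _; exists 1; first exact: contraction_proper.
  exists 0, h; rewrite polyC1 mul1r mulr0 add0r; split=> // i.
  exact: (symbolic_pow0 contraction_proper).
move=> [s [sM ->]]; apply: (ideal_sum (is_ideal_in_sat_span _)) => p /sM[Mp1 Mp2].
by apply: in_sat_spanSM; [apply: IHk | apply: in_sat_span_maximal].
Qed.

Lemma in_sat_span_constant k x : in_sat_span k x%:P -> symbolic_pow P k x.
Proof.
move=> [s Ps [H [e [E Qe]]]].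
have QH : coefs_in (symbolic_pow P k) H.
  apply: (coefs_in_cofactor (idQ k) _ Qe) => [y | i le_i].
    exact: (symbolic_powK contraction_prime Pg).
  have d_gt0 : (0 < (size g).-1)%N by rewrite -subn1 subn_gt0.
  by rewrite -E -polyCM coefC gtn_eqF //; apply: leq_trans d_gt0 le_i.
apply: (symbolic_powK contraction_prime Ps).
have -> : s * x = g`_0 * H`_0 + e`_0 by rewrite -coef0M -coefD -E -polyCM coefC.
by apply: (idealD (idQ k)); [apply: (idealMl (idQ k)) | apply: Qe].
Qed.

End Reduction.

Lemma contraction_pow_symbolic t x :
  contraction (ideal_pow M t) x -> symbolic_pow P t x.
Proof.
have [g [Mg Pg size_g low_g]] := exists_minimal_generator.
by move=> /(in_sat_span_pow Mg Pg size_g low_g)/(in_sat_span_constant Pg size_g).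
Qed.

Lemma symbolic_pow_contraction t x :
  symbolic_pow P t x -> contraction (ideal_pow M t) x.
Proof.
move=> [s [Ps Psx]]; apply: (maximal_pow_primary maxM Ps).
by rewrite -polyCM; apply: ideal_pow_contraction.
Qed.

End MaximalPolynomialIdeal.

Theorem theorem3p7 (R : idomainType) (M : {poly R} -> Prop) :
  is_maximal_ideal M ->
  (power_stable M <->
   forall t : nat, (1 <= t)%N ->
     forall x : R, symbolic_pow (contraction M) t x <-> ideal_pow (contraction M) t x).
Proof.
move=> maxM; split=> [stable t t_gt0 x | symbolic_eq t t_gt0 x]; split.
- by move/(symbolic_pow_contraction maxM)/(stable t t_gt0).
- exact: (ideal_pow_symbolic (contraction_proper maxM)).
- by move/(contraction_pow_symbolic maxM)/(symbolic_eq t t_gt0).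
- exact: ideal_pow_contraction.
Qed.
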